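(* Let $H$ be a connected triangle-free graph with no full star-cutset. If $H$ is a restricted frame graph, then $H$ is either a path or a chandelier.
   Context: A full star-cutset of a connected graph $G$ is a set $N[u]=\{u\}\cup N(u)$ whose removal disconnects $G$. A chandelier is a graph obtained from a tree $T$ by adding a new vertex adjacent to every leaf of $T$. A frame is the boundary of an axis-parallel box $I\times J\subset\mathbb R^2$. A graph $G$ is a restricted frame graph if there is a family of frames $\{F_v : v\in V(G)\}$ with $uv\in E(G)$ iff $F_u\cap F_v\neq\emptyset$, satisfying: (1) corners of a frame do not coincide with any point of another frame; (2) the left side of any frame does not intersect any other frame; (3) if the right side of a frame intersects a second frame, this right side intersects both the top and the bottom side of the second frame; (4) if two frames have non-empty intersection, then no frame is entirely contained in the intersection of the two regions bounded by these two frames. *)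

From Stdlib Require Import Reals.
From mathcomp Require Import all_boot.

Set Implicit Arguments.
Unset Strict Implicit.
Unset Printing Implicit Defensive.

Definition simple_graph (V : finType) (e : rel V) : Prop :=
  symmetric e /\ irreflexive e.

Definition induced (V : finType) (e : rel V) (S : {set V}) : rel V :=
  [rel x y | [&& x \in S, y \in S & e x y]].

Definition connected_on (V : finType) (e : rel V) (S : {set V}) : Prop :=
  forall x y, x \in S -> y \in S -> connect (induced e S) x y.

Definition connected_graph (V : finType) (e : rel V) : Prop :=
  connected_on e [set: V].

Definition triangle_free (V : finType) (e : rel V) : Prop :=
  forall x y z : V, ~ [&& e x y, e y z & e z x].

Definition closed_nbhd (V : finType) (e : rel V) (u : V) : {set V} :=
  u |: [set v | e u v].

Definition full_star_cutset (V : finType) (e : rel V) (u : V) : Prop :=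
  exists x y, [/\ x \in ~: closed_nbhd e u, y \in ~: closed_nbhd e u &
                  ~~ connect (induced e (~: closed_nbhd e u)) x y].

Definition no_full_star_cutset (V : finType) (e : rel V) : Prop :=
  forall u, ~ full_star_cutset e u.

Definition is_path_graph (V : finType) (e : rel V) : Prop :=
  exists f : V -> 'I_#|V|, bijective f /\
    forall x y, e x y = ((f x).+1 == f y) || ((f y).+1 == f x).

Definition acyclic_on (V : finType) (e : rel V) (S : {set V}) : Prop :=
  forall s : seq V, all (fun x => x \in S) s -> uniq s -> 3 <= size s ->
    ~~ cycle e s.

Definition tree_on (V : finType) (e : rel V) (S : {set V}) : Prop :=
  S != set0 /\ connected_on e S /\ acyclic_on e S.

(* H is a chandelier: there is a vertex z such that H - z is a tree T and
   the neighbours of z are exactly the leaves (degree-1 vertices) of T. *)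
Definition is_chandelier (V : finType) (e : rel V) : Prop :=
  exists z : V,
    tree_on e (~: [set z]) /\
    forall v, v != z ->
      e z v = (#|[set w in ~: [set z] | e v w]| == 1).

Local Open Scope R_scope.

(* the boundary of the box [x1,x2] x [y1,y2], with x1 < x2 and y1 < y2 *)
Record frame := Frame {
  fx1 : R; fx2 : R; fy1 : R; fy2 : R;
  fx_lt : fx1 < fx2; fy_lt : fy1 < fy2 }.

Definition point := (R * R)%type.

Definition in_box (F : frame) (p : point) : Prop :=
  fx1 F <= fst p <= fx2 F /\ fy1 F <= snd p <= fy2 F.

Definition on_frame (F : frame) (p : point) : Prop :=
  in_box F p /\
  (fst p = fx1 F \/ fst p = fx2 F \/ snd p = fy1 F \/ snd p = fy2 F).

Definition left_side (F : frame) (p : point) : Prop :=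
  fst p = fx1 F /\ fy1 F <= snd p <= fy2 F.
Definition right_side (F : frame) (p : point) : Prop :=
  fst p = fx2 F /\ fy1 F <= snd p <= fy2 F.
Definition bottom_side (F : frame) (p : point) : Prop :=
  snd p = fy1 F /\ fx1 F <= fst p <= fx2 F.
Definition top_side (F : frame) (p : point) : Prop :=
  snd p = fy2 F /\ fx1 F <= fst p <= fx2 F.

Definition corner (F : frame) (p : point) : Prop :=
  (fst p = fx1 F \/ fst p = fx2 F) /\ (snd p = fy1 F \/ snd p = fy2 F).

Definition meets (A B : point -> Prop) : Prop := exists p, A p /\ B p.

Local Close Scope R_scope.

Definition restricted_frame_graph (V : finType) (e : rel V) : Prop :=
  exists F : V -> frame,
    (forall u v, u <> v -> (e u v <-> meets (on_frame (F u)) (on_frame (F v)))) /\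
    (* (1) corners of a frame do not lie on another frame *)
    (forall u v, u <> v -> forall p, corner (F u) p -> ~ on_frame (F v) p) /\
    (* (2) the left side of a frame meets no other frame *)
    (forall u v, u <> v -> ~ meets (left_side (F u)) (on_frame (F v))) /\
    (* (3) right side meeting a second frame meets its top and bottom sides *)
    (forall u v, u <> v -> meets (right_side (F u)) (on_frame (F v)) ->
       meets (right_side (F u)) (top_side (F v)) /\
       meets (right_side (F u)) (bottom_side (F v))) /\
    (* (4) no frame inside the intersection of the regions of two
           intersecting frames *)
    (forall u v, u <> v -> meets (on_frame (F u)) (on_frame (F v)) ->
       forall w, ~ (forall p, on_frame (F w) p -> in_box (F u) p /\ in_box (F v) p)).

(* Two meeting frames of a restricted frame representation always cross in the same
   way: one of them pierces the other through its right side.  Since G - N[v] is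
   connected, once some frame lies inside F v, so does the frame of every vertex
   outside N[v].  Let h be, among the vertices whose frame contains another frame,
   one with leftmost left side (any vertex if there is none).  Then no frame other
   than F h is pierced by two frames other than F h, whereas in a cycle of G - h the
   frame with rightmost right side is pierced by both of its neighbours: G - h is a
   forest.
   If some vertex has at most one neighbour, the absence of full star cutsets forces
   G to be a path on at most four vertices.  Otherwise each neighbour of h has
   exactly one neighbour outside N[h] (two of them would close a cycle with a path
   of G - N[h]), so G - h is a tree whose leaves are the neighbours of h. *)

From Stdlib Require Import Reals Lra Classical.
From mathcomp Require Import all_boot.

Set Implicit Arguments.
Unset Strict Implicit.
Unset Printing Implicit Defensive.

Section SimpleGraph.
Variables (V : finType) (e : rel V).

Lemma edge_neq : irreflexive e -> forall a b, e a b -> a != b.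
Proof. by move=> irr_e a b; apply: contraTneq => ->; rewrite irr_e. Qed.

Lemma no_triangle : triangle_free e -> forall x y z, e x y -> e y z -> e z x -> False.
Proof. by move=> htf x y z exy eyz ezx; apply: (htf x y z); rewrite exy eyz ezx. Qed.

Lemma induced_sym S : symmetric e -> symmetric (induced e S).
Proof. by move=> sym_e a b; rewrite /induced /= sym_e andbCA. Qed.

Lemma induced_path S x p : path (induced e S) x p -> path e x p /\ {subset p <= S}.
Proof.
elim: p x => [// | a p IH] x /= /andP [/and3P [_ aS e_xa] /IH [p_path p_S]].
by rewrite e_xa p_path; split=> // y; rewrite inE => /predU1P [-> | /p_S].
Qed.

End SimpleGraph.

Lemma connect_invariant (T : finType) (r : rel T) (Q : T -> Prop) x y :
  connect r x y -> Q x -> (forall a b, Q a -> r a b -> Q b) -> Q y.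
Proof.
move=> /connectP [p + ->] + step; elim: p x => //= a p IH x /andP[rxa pa] Qx.
exact: IH pa (step _ _ Qx rxa).
Qed.

Lemma cycle_neighbours (T : eqType) (r : rel T) (s : seq T) c :
  uniq s -> 3 <= size s -> cycle r s -> c \in s ->
  exists a b, [/\ a \in s, b \in s, a != b, r c a & r b c].
Proof.
move=> us size_s cyc /rot_to [i s'].
case: s' => [|a [|y p]] rot_s; have := congr1 size rot_s; rewrite size_rot => size_eq;
  try by rewrite size_eq in size_s.
have mem_rot_s z : z \in c :: a :: y :: p -> z \in s by rewrite -rot_s mem_rot.
have /and3P[_ a_yp _] : uniq [:: c, a, y & p] by rewrite -rot_s rot_uniq.
move: cyc; rewrite -(rot_cycle i) rot_s /cycle rcons_path => /andP[/andP[r_ca _] r_lc].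
exists a, (last y p); split=> //.
- by apply: mem_rot_s; rewrite !inE eqxx orbT.
- by apply: mem_rot_s; rewrite 2!in_cons mem_last !orbT.
- by apply: contraNneq a_yp => ->; apply: mem_last.
Qed.

Section Consecutive.
Variable T : eqType.
Implicit Types (s : seq T) (a b : T).

Definition consecutive s a b : bool := infix [:: a; b] s || infix [:: b; a] s.

Lemma consecutive_sym s a b : consecutive s a b = consecutive s b a.
Proof. exact: orbC. Qed.

Lemma consecutive_cat s1 s2 a b : consecutive (s1 ++ a :: b :: s2) a b.
Proof. by rewrite /consecutive (infix_infix s1 [:: a; b] s2). Qed.

Lemma consecutive_memr s a b : consecutive s a b -> b \in s.
Proof. by case/orP => [/consl_infix | /consr_infix]; rewrite infix1s. Qed.

Lemma infix_pair_index s a b : uniq s -> b \in s ->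
  infix [:: a; b] s = ((index a s).+1 == index b s).
Proof.
move=> us bs; apply/idP/eqP => [/infixP [s1 [s2 def_s]] | index_ab].
  move: us; rewrite def_s cat_uniq /= !negb_or.
  move=> /and4P[_ /and3P[a_s1 b_s1 _] /andP[ab _] _].
  by rewrite !index_cat (negbTE a_s1) (negbTE b_s1) /= (negbTE ab) !eqxx addn0 addn1.
have lt_b : (index a s).+1 < size s by rewrite index_ab index_mem.
have lt_a : index a s < size s := ltnW lt_b.
rewrite -(cat_take_drop (index a s) s) (drop_nth a lt_a) (drop_nth b lt_b).
by rewrite nth_index -?index_mem // index_ab nth_index //; apply: infix_infix.
Qed.

End Consecutive.

Section PathGraph.
Variables (V : finType) (e : rel V).
Hypothesis sym_e : symmetric e.

Lemma path_graph_of_seq s : uniq s -> (forall v, v \in s) ->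
  (forall a b, e a b = consecutive s a b) -> is_path_graph e.
Proof.
move=> us s_full e_consec.
have card_V : #|V| = size s.
  by rewrite -(card_uniqP us); apply: eq_card => v; rewrite s_full.
have index_lt v : index v s < #|V| by rewrite card_V index_mem.
pose f v := Ordinal (index_lt v).
have f_inj : injective f by move=> a b /(congr1 val); apply: index_inj.
exists f; split; first by apply: inj_card_bij f_inj _; rewrite card_ord.
by move=> a b; rewrite e_consec /consecutive !infix_pair_index.
Qed.

Lemma path_graph_of_closed_path x p : connected_graph e -> uniq (x :: p) ->
  path e x p -> (forall a b, a \in x :: p -> e a b -> consecutive (x :: p) a b) ->
  is_path_graph e.
Proof.
move=> hconn us pth closed.
have s_full v : v \in x :: p.
  apply: (connect_invariant (Q := fun a => a \in x :: p)
           (hconn x v (in_setT x) (in_setT v))).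
    exact: mem_head.
  by move=> a b a_s /and3P[_ _ /(closed _ _ a_s) /consecutive_memr].
have consec_edge a b : infix [:: a; b] (x :: p) -> e a b.
  by move=> /infix_sorted /(_ pth) /=; rewrite andbT.
apply: (path_graph_of_seq us s_full) => a b.
apply/idP/idP => [/(closed _ _ (s_full a)) // | /orP [/consec_edge // | /consec_edge]].
by rewrite sym_e.
Qed.

End PathGraph.


Section StarCutset.
Variables (V : finType) (e : rel V).
Hypothesis nofsc : no_full_star_cutset e.

Lemma mem_closed_nbhd u x : (x \in closed_nbhd e u) = (x == u) || e u x.
Proof. by rewrite !inE. Qed.

Lemma connect_outside_nbhd u x y :
  x \notin closed_nbhd e u -> y \notin closed_nbhd e u ->
  connect (induced e (~: closed_nbhd e u)) x y.
Proof.
move=> xN yN; apply/negPn/negP => disconn; apply: (nofsc (u := u)).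
by exists x, y; rewrite !in_setC.
Qed.

(* [w] is isolated in the connected graph [G - N[u]]. *)
Lemma outside_nbhd_trapped u w : w \notin closed_nbhd e u ->
  (forall b, e w b -> b \in closed_nbhd e u) ->
  forall y, y \notin closed_nbhd e u -> y = w.
Proof.
move=> wN w_nbrs y yN.
apply: (connect_invariant (Q := eq^~ w) (connect_outside_nbhd wN yN)) => //.
by move=> a b -> /and3P[_ bN /w_nbrs]; rewrite in_setC in bN; rewrite (negbTE bN).
Qed.

End StarCutset.

Section Leaf.
Variables (V : finType) (e : rel V).
Hypotheses (sym_e : symmetric e) (irr_e : irreflexive e).
Hypotheses (hconn : connected_graph e) (htf : triangle_free e).
Hypothesis nofsc : no_full_star_cutset e.

Section LeafVertex.
Variables l t : V.
Hypotheses (l_leaf : forall b, e l b -> b = t) (e_lt : e l t).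

Section ThirdVertex.
Variable x : V.
Hypotheses (e_tx : e t x) (x_l : x != l).

Lemma leaf_nonedge : ~~ e x l.
Proof. by apply/negP; rewrite sym_e => /l_leaf x_t; move: e_tx; rewrite x_t irr_e. Qed.

Lemma outside_nbhd_leaf y : y \notin closed_nbhd e x -> y = l.
Proof.
apply: outside_nbhd_trapped => //.
  by rewrite mem_closed_nbhd eq_sym (negbTE x_l) (negbTE leaf_nonedge).
by move=> b /l_leaf ->; rewrite mem_closed_nbhd sym_e e_tx orbT.
Qed.

Lemma leaf_nbhd2 z : e t z -> z = l \/ z = x.
Proof.
move=> e_tz; case: (boolP (z \in closed_nbhd e x)) => [|/outside_nbhd_leaf]; last by left.
rewrite mem_closed_nbhd => /orP [/eqP | e_xz]; first by right.
by case: (no_triangle htf e_tx e_xz); rewrite sym_e.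
Qed.

Lemma leaf_nbhd4 y z : e x y -> y != t -> e y z -> z = x.
Proof.
move=> e_xy y_t e_yz; case: (boolP (z \in closed_nbhd e x)) => [|/outside_nbhd_leaf z_l].
  rewrite mem_closed_nbhd => /orP [/eqP // | e_xz].
  by case: (no_triangle htf e_xy e_yz); rewrite sym_e.
by move: e_yz y_t; rewrite z_l sym_e => /l_leaf ->; rewrite eqxx.
Qed.

(* Another neighbour [z] of [x] would, like [y], have [x] as its only neighbour;
   then [z] and [l] would both be isolated in the connected graph [G - N[y]]. *)
Lemma leaf_nbhd3 y z : e x y -> y != t -> e x z -> z = t \/ z = y.
Proof.
move=> e_xy y_t e_xz; apply: NNPP => /not_or_and [/eqP z_t /eqP z_y].
have z_nbrs b : e z b -> b = x := leaf_nbhd4 e_xz z_t.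
have y_nbrs b : e y b -> b = x := leaf_nbhd4 e_xy y_t.
have z_l : l = z.
  apply: (outside_nbhd_trapped nofsc (u := y)).
  - rewrite mem_closed_nbhd negb_or z_y /=; apply/negP => /y_nbrs z_x.
    by rewrite z_x irr_e in e_xz.
  - by move=> b /z_nbrs ->; rewrite mem_closed_nbhd sym_e e_xy orbT.
  - rewrite mem_closed_nbhd negb_or; apply/andP; split.
      by apply: contraNneq leaf_nonedge => ->.
    by apply/negP => /y_nbrs l_x; move: x_l; rewrite l_x eqxx.
by move: leaf_nonedge; rewrite z_l e_xz.
Qed.

End ThirdVertex.

Lemma leaf_path_graph2 : (forall z, e t z -> z = l) -> is_path_graph e.
Proof.
move=> t_nbrs; apply: (path_graph_of_closed_path sym_e hconn (x := l) (p := [:: t])).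
- by rewrite /= inE andbT (edge_neq irr_e e_lt).
- by rewrite /= e_lt.
move=> a b; rewrite !inE => /orP [] /eqP -> e_ab.
- by rewrite (l_leaf e_ab); apply: (consecutive_cat [::] [::]).
- by rewrite (t_nbrs _ e_ab) consecutive_sym; apply: (consecutive_cat [::] [::]).
Qed.

Lemma leaf_path_graph3 x : e t x -> x != l -> (forall z, e x z -> z = t) ->
  is_path_graph e.
Proof.
move=> e_tx x_l x_nbrs.
apply: (path_graph_of_closed_path sym_e hconn (x := l) (p := [:: t; x])).
- by rewrite /= !inE !negb_or (edge_neq irr_e e_lt) (edge_neq irr_e e_tx) eq_sym x_l.
- by rewrite /= e_lt e_tx.
move=> a b; rewrite !inE => /or3P [] /eqP -> e_ab.
- by rewrite (l_leaf e_ab); apply: (consecutive_cat [::] [:: x]).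
- case: (leaf_nbhd2 e_tx x_l e_ab) => ->.
    by rewrite consecutive_sym; apply: (consecutive_cat [::] [:: x]).
  exact: (consecutive_cat [:: l] [::]).
- by rewrite (x_nbrs _ e_ab) consecutive_sym; apply: (consecutive_cat [:: l] [::]).
Qed.

Lemma leaf_path_graph4 x y : e t x -> x != l -> e x y -> y != t -> is_path_graph e.
Proof.
move=> e_tx x_l e_xy y_t.
have l_y : l != y by apply: (contraNneq _ (leaf_nonedge e_tx)) => ->.
apply: (path_graph_of_closed_path sym_e hconn (x := l) (p := [:: t; x; y])).
- rewrite /= !inE !negb_or (edge_neq irr_e e_lt) (edge_neq irr_e e_tx).
  by rewrite (edge_neq irr_e e_xy) l_y eq_sym x_l eq_sym y_t.
- by rewrite /= e_lt e_tx e_xy.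
move=> a b; rewrite !inE => /or4P [] /eqP -> e_ab.
- by rewrite (l_leaf e_ab); apply: (consecutive_cat [::] [:: x; y]).
- case: (leaf_nbhd2 e_tx x_l e_ab) => ->.
    by rewrite consecutive_sym; apply: (consecutive_cat [::] [:: x; y]).
  exact: (consecutive_cat [:: l] [:: y]).
- case: (leaf_nbhd3 e_tx x_l e_xy y_t e_ab) => ->.
    by rewrite consecutive_sym; apply: (consecutive_cat [:: l] [:: y]).
  exact: (consecutive_cat [:: l; t] [::]).
- rewrite (leaf_nbhd4 e_tx x_l e_xy y_t e_ab) consecutive_sym.
  exact: (consecutive_cat [:: l; t] [::]).
Qed.

End LeafVertex.

Lemma path_graph_of_leaf l : (forall a b, e l a -> e l b -> a = b) -> is_path_graph e.
Proof.
move=> l_deg; have [t e_lt | l_isolated] := pickP (e l); last first.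
  apply: (path_graph_of_closed_path sym_e hconn (x := l) (p := [::])) => // a b.
  by rewrite inE => /eqP ->; rewrite l_isolated.
have l_leaf b : e l b -> b = t by move/l_deg; apply.
have [x /andP [e_tx x_l] | t_deg] := pickP (fun x => e t x && (x != l)).
  have [y /andP [e_xy y_t] | x_deg] := pickP (fun y => e x y && (y != t)).
    exact: (leaf_path_graph4 l_leaf e_lt e_tx x_l e_xy y_t).
  apply: (leaf_path_graph3 l_leaf e_lt e_tx x_l) => z e_xz.
  by apply/eqP; move: (x_deg z); rewrite e_xz => /negbFE.
apply: (leaf_path_graph2 l_leaf e_lt) => z e_tz.
by apply/eqP; move: (t_deg z); rewrite e_tz => /negbFE.
Qed.

End Leaf.

Section Chandelier.
Variables (V : finType) (e : rel V).
Hypotheses (sym_e : symmetric e) (irr_e : irreflexive e).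
Hypotheses (htf : triangle_free e) (nofsc : no_full_star_cutset e).
Hypothesis two_nbrs : forall v, exists a b, [/\ a != b, e v a & e v b].
Variable h : V.
Hypothesis acyclic_h : acyclic_on e (~: [set h]).

Lemma neighbour_off_hub v : exists2 w, e v w & w != h.
Proof.
have [a [b [ab e_va e_vb]]] := two_nbrs v.
by case: (eqVneq a h) => [a_h | ]; [exists b; rewrite // -a_h eq_sym | exists a].
Qed.

Lemma outside_hub_nbhd n w : e h n -> e n w -> w != h -> w \notin closed_nbhd e h.
Proof.
move=> e_hn e_nw w_h; rewrite mem_closed_nbhd negb_or w_h /=.
by apply/negP => e_hw; apply: (no_triangle htf e_hn e_nw); rewrite sym_e.
Qed.

Lemma notin_closed_nbhd_setC1 x : x \notin closed_nbhd e h -> x \in ~: [set h].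
Proof. by rewrite mem_closed_nbhd !inE negb_or => /andP []. Qed.

(* Two outer neighbours of [n] are joined by a path in the connected graph
   [G - N[h]], which closes a cycle through [n] in [G - h]. *)
Lemma outer_neighbour_unique n w1 w2 : e h n ->
  w1 \notin closed_nbhd e h -> w2 \notin closed_nbhd e h -> e n w1 -> e n w2 -> w1 = w2.
Proof.
move=> e_hn w1N w2N e_nw1 e_nw2; apply/eqP/negPn/negP => w12.
have [p p_ind [p_uniq p_last]] : exists2 p, path (induced e (~: closed_nbhd e h)) w1 p &
    uniq (w1 :: p) /\ last w1 p = w2.
  move: (connect_outside_nbhd nofsc w1N w2N) => /connectP [p0 + ->].
  by case/shortenP => p ? ? _; exists p.
have [p_path p_N] := induced_path p_ind.
have cycle_N y : y \in w1 :: p -> y \notin closed_nbhd e h.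
  by rewrite inE => /predU1P [-> // | /p_N]; rewrite in_setC.
have n_cycle : n \notin w1 :: p.
  by apply/negP => /cycle_N; rewrite mem_closed_nbhd e_hn orbT.
have off_h : all (fun x => x \in ~: [set h]) (n :: w1 :: p).
  apply/allP => y; rewrite inE => /predU1P [-> | /cycle_N /notin_closed_nbhd_setC1 //].
  by rewrite !inE eq_sym (edge_neq irr_e e_hn).
have size_p : 3 <= size (n :: w1 :: p).
  by rewrite /= !ltnS lt0n size_eq0; apply: contraNneq w12 => p0; rewrite -p_last p0.
have uniq_cycle : uniq (n :: w1 :: p) by rewrite cons_uniq n_cycle p_uniq.
case/negP: (acyclic_h off_h uniq_cycle size_p).
by rewrite /= e_nw1 rcons_path p_path p_last sym_e e_nw2.
Qed.

Lemma reach_outside_hub_nbhd x : x \in ~: [set h] ->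
  exists2 w, w \notin closed_nbhd e h & connect (induced e (~: [set h])) x w.
Proof.
move=> x_h; case: (boolP (e h x)) => [e_hx | not_hx].
  have [w e_xw w_h] := neighbour_off_hub x.
  exists w; first exact: outside_hub_nbhd e_hx e_xw w_h.
  by apply: connect1; rewrite /induced /= x_h e_xw !inE w_h.
exists x => //; move: x_h; rewrite mem_closed_nbhd !inE negb_or => ->.
by rewrite (negbTE not_hx).
Qed.

Lemma tree_minus_hub : tree_on e (~: [set h]).
Proof.
split; first by have [w _ w_h] := neighbour_off_hub h; apply/set0Pn; exists w; rewrite !inE.
split=> // x y x_h y_h.
have [wx wxN x_wx] := reach_outside_hub_nbhd x_h.
have [wy wyN y_wy] := reach_outside_hub_nbhd y_h.
have conn_sym := sym_connect_sym (induced_sym (~: [set h]) sym_e).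
apply: (connect_trans x_wx); rewrite conn_sym; apply: (connect_trans y_wy).
rewrite conn_sym; apply: connect_sub (connect_outside_nbhd nofsc wxN wyN).
move=> a b /and3P [aN bN e_ab]; rewrite !in_setC in aN bN.
by apply: connect1; rewrite /induced /= e_ab !notin_closed_nbhd_setC1.
Qed.

Lemma hub_neighbour_leaf v : v != h ->
  e h v = (#|[set w in ~: [set h] | e v w]| == 1).
Proof.
move=> v_h; case: (boolP (e h v)) => [e_hv | not_hv].
  have [w e_vw w_h] := neighbour_off_hub v.
  suff -> : [set w0 in ~: [set h] | e v w0] = [set w] by rewrite cards1.
  apply/setP => z; rewrite !inE; apply/andP/eqP => [[z_h e_vz] | ->]; last by [].
  have zN := outside_hub_nbhd e_hv e_vz z_h.
  exact: outer_neighbour_unique e_hv zN (outside_hub_nbhd e_hv e_vw w_h) e_vz e_vw.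
have [a [b [ab e_va e_vb]]] := two_nbrs v.
have off_h c : e v c -> c != h by apply: contraTneq => ->; rewrite sym_e.
have : 2 <= #|[set w0 in ~: [set h] | e v w0]|.
  rewrite -[2]/(true.+1) -ab -cards2; apply: subset_leq_card; apply/subsetP => z.
  by rewrite !inE => /orP [] /eqP ->; rewrite ?off_h ?e_va ?e_vb.
by case: #|_| => [|[|k]].
Qed.

End Chandelier.

Lemma chandelier_of_acyclic_minus (V : finType) (e : rel V) (h : V) :
  symmetric e -> irreflexive e -> triangle_free e -> no_full_star_cutset e ->
  (forall v, exists a b, [/\ a != b, e v a & e v b]) ->
  acyclic_on e (~: [set h]) -> is_chandelier e.
Proof.
move=> sym_e irr_e htf nofsc two_nbrs acyclic_h; exists h; split.
  exact: tree_minus_hub.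
exact: hub_neighbour_leaf.
Qed.

Local Open Scope R_scope.

Lemma exists_argmin (T : eqType) (P : T -> Prop) (f : T -> R) (s : seq T) :
  (exists2 x, x \in s & P x) ->
  exists m, [/\ m \in s, P m & forall x, x \in s -> P x -> f m <= f x].
Proof.
elim: s => [[x] // | a s IH] [x0 x0s Px0].
case: (classic (exists2 x, x \in s & P x)) => [/IH [m [ms Pm min_m]] | none].
  case: (classic (P a /\ f a <= f m)) => [[Pa le_am] | not_a].
    exists a; split; rewrite ?mem_head // => x; rewrite inE => /predU1P [-> _ | xs Px].
      exact: Rle_refl.
    exact: Rle_trans le_am (min_m x xs Px).
  exists m; split; rewrite ?inE ?ms ?orbT // => x; rewrite inE => /predU1P [-> Pa | ].
    by apply: Rlt_le; apply: Rnot_le_lt => le_am; apply: not_a.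
  exact: min_m.
have in_s y : y \in a :: s -> P y -> y = a.
  by rewrite inE => /predU1P [// | ys Py]; case: none; exists y.
have Pa : P a by rewrite -(in_s x0 x0s Px0).
exists a; split=> // [|y ys Py]; first exact: mem_head.
by rewrite (in_s y ys Py); apply: Rle_refl.
Qed.

Definition pierces (A B : frame) : Prop :=
  [/\ fx1 A < fx1 B, fx1 B < fx2 A, fx2 A < fx2 B, fy1 A < fy1 B & fy2 B < fy2 A].

Definition inside (A B : frame) : Prop :=
  [/\ fx1 B < fx1 A, fx2 A < fx2 B, fy1 B < fy1 A & fy2 A < fy2 B].

Definition restricted_pair (A B : frame) : Prop :=
  [/\ forall p, corner A p -> ~ on_frame B p,
      ~ meets (left_side A) (on_frame B)
    & meets (right_side A) (on_frame B) ->
      meets (right_side A) (top_side B) /\ meets (right_side A) (bottom_side B)].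

Lemma meets_sym (P Q : point -> Prop) : meets P Q -> meets Q P.
Proof. by move=> [p [hP hQ]]; exists p. Qed.

Section OnFrame.
Variables (F : frame) (x y : R).

Lemma on_frame_left : x = fx1 F -> fy1 F <= y <= fy2 F -> on_frame F (x, y).
Proof. by move=> ? ?; have := fx_lt F; split; [split; simpl; lra | left]. Qed.

Lemma on_frame_right : x = fx2 F -> fy1 F <= y <= fy2 F -> on_frame F (x, y).
Proof. by move=> ? ?; have := fx_lt F; split; [split; simpl; lra | right; left]. Qed.

Lemma on_frame_bottom : y = fy1 F -> fx1 F <= x <= fx2 F -> on_frame F (x, y).
Proof. by move=> ? ?; have := fy_lt F; split; [split; simpl; lra | right; right; left]. Qed.

Lemma on_frame_top : y = fy2 F -> fx1 F <= x <= fx2 F -> on_frame F (x, y).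
Proof. by move=> ? ?; have := fy_lt F; split; [split; simpl; lra | right; right; right]. Qed.

End OnFrame.

Lemma pierces_meet A B : pierces A B -> meets (on_frame A) (on_frame B).
Proof.
case=> ? ? ? ? ?; have := fy_lt B => ?; exists (fx2 A, fy2 B).
by split; [apply: on_frame_right | apply: on_frame_top]; lra.
Qed.

Lemma inside_not_meet A B : inside A B -> ~ meets (on_frame A) (on_frame B).
Proof.
case=> ? ? ? ? [p [[[[? ?] [? ?]] _] [[[? ?] [? ?]] hB]]].
by case: hB => [|[|[|]]] ?; lra.
Qed.

Lemma inside_interior A B p : inside A B -> on_frame A p ->
  fx1 B < fst p < fx2 B /\ fy1 B < snd p < fy2 B.
Proof. by case=> ? ? ? ? [[[? ?] [? ?]] _]; lra. Qed.

(* [B] lies inside [A]: otherwise one of its sides would cross the boundary of [A]. *)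
Section Escape.
Variables (A B : frame) (q : point).
Hypothesis disjAB : ~ meets (on_frame A) (on_frame B).
Hypothesis qB : on_frame B q.
Hypothesis qx : fx1 A < fst q < fx2 A.
Hypothesis qy : fy1 A < snd q < fy2 A.

Let qbox : in_box B q := proj1 qB.
Let qside := proj2 qB.

Lemma escape_left : fx1 A < fx1 B.
Proof.
apply: Rnot_le_lt => ?; apply: disjAB; move: qbox => [[? ?] [? ?]].
case: (Rle_lt_dec (fy1 A) (fy1 B)) => ?.
  by exists (fx1 A, fy1 B); split; [apply: on_frame_left | apply: on_frame_bottom]; lra.
case: (Rle_lt_dec (fy2 B) (fy2 A)) => ?.
  by exists (fx1 A, fy2 B); split; [apply: on_frame_left | apply: on_frame_top]; lra.
case: (Rle_lt_dec (fx2 B) (fx2 A)) => ?.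
  by exists (fx2 B, fy1 A); split; [apply: on_frame_bottom | apply: on_frame_right]; lra.
by exfalso; case: qside => [|[|[|]]] ?; lra.
Qed.

Lemma escape_right : fx2 B < fx2 A.
Proof.
apply: Rnot_le_lt => ?; apply: disjAB; move: qbox => [[? ?] [? ?]].
case: (Rle_lt_dec (fy1 A) (fy1 B)) => ?.
  by exists (fx2 A, fy1 B); split; [apply: on_frame_right | apply: on_frame_bottom]; lra.
case: (Rle_lt_dec (fy2 B) (fy2 A)) => ?.
  by exists (fx2 A, fy2 B); split; [apply: on_frame_right | apply: on_frame_top]; lra.
case: (Rle_lt_dec (fx1 A) (fx1 B)) => ?.
  by exists (fx1 B, fy1 A); split; [apply: on_frame_bottom | apply: on_frame_left]; lra.
by exfalso; case: qside => [|[|[|]]] ?; lra.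
Qed.

Lemma escape_bottom : fy1 A < fy1 B.
Proof.
apply: Rnot_le_lt => ?; apply: disjAB; move: qbox => [[? ?] [? ?]].
case: (Rle_lt_dec (fx1 A) (fx1 B)) => ?.
  by exists (fx1 B, fy1 A); split; [apply: on_frame_bottom | apply: on_frame_left]; lra.
case: (Rle_lt_dec (fx2 B) (fx2 A)) => ?.
  by exists (fx2 B, fy1 A); split; [apply: on_frame_bottom | apply: on_frame_right]; lra.
case: (Rle_lt_dec (fy2 B) (fy2 A)) => ?.
  by exists (fx1 A, fy2 B); split; [apply: on_frame_left | apply: on_frame_top]; lra.
by exfalso; case: qside => [|[|[|]]] ?; lra.
Qed.

Lemma escape_top : fy2 B < fy2 A.
Proof.
apply: Rnot_le_lt => ?; apply: disjAB; move: qbox => [[? ?] [? ?]].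
case: (Rle_lt_dec (fx1 A) (fx1 B)) => ?.
  by exists (fx1 B, fy2 A); split; [apply: on_frame_top | apply: on_frame_left]; lra.
case: (Rle_lt_dec (fx2 B) (fx2 A)) => ?.
  by exists (fx2 B, fy2 A); split; [apply: on_frame_top | apply: on_frame_right]; lra.
case: (Rle_lt_dec (fy1 A) (fy1 B)) => ?.
  by exists (fx1 A, fy1 B); split; [apply: on_frame_left | apply: on_frame_bottom]; lra.
by exfalso; case: qside => [|[|[|]]] ?; lra.
Qed.

Lemma inside_of_disjoint : inside B A.
Proof. by split; [exact: escape_left | exact: escape_right
                 | exact: escape_bottom | exact: escape_top]. Qed.

End Escape.

Lemma inside_of_pierced_disjoint A B C : pierces A C -> pierces B C ->
  ~ meets (on_frame A) (on_frame B) -> fx2 A < fx2 B -> inside A B.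
Proof.
move=> [? ? ? ? ?] [? ? ? ? ?] disjAB ?.
have := fx_lt A; have := fy_lt A; have := fx_lt B; have := fy_lt B => ? ? ? ?.
have := fy_lt C => ?.
have ? : fy1 B < fy1 A.
  apply: Rnot_le_lt => ?; apply: disjAB; exists (fx2 A, fy1 B).
  by split; [apply: on_frame_right | apply: on_frame_bottom]; lra.
have ? : fy2 A < fy2 B.
  apply: Rnot_le_lt => ?; apply: disjAB; exists (fx2 A, fy2 B).
  by split; [apply: on_frame_right | apply: on_frame_top]; lra.
have ? : fx1 B < fx1 A.
  apply: Rnot_le_lt => ?; apply: disjAB; exists (fx1 B, fy2 A).
  by split; [apply: on_frame_top | apply: on_frame_left]; lra.
by split.
Qed.

Lemma nested_of_pierced_disjoint A B C : pierces A C -> pierces B C ->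
  ~ meets (on_frame A) (on_frame B) -> inside A B \/ inside B A.
Proof.
move=> pAC pBC disjAB.
case: (total_order_T (fx2 A) (fx2 B)) => [[lt_AB | eq_AB] | lt_BA].
- by left; apply: inside_of_pierced_disjoint pAC pBC disjAB lt_AB.
- exfalso; apply: disjAB; case: pAC pBC => ? ? ? ? ? [? ? ? ? ?].
  have := fy_lt C => ?; exists (fx2 A, fy1 C).
  by split; apply: on_frame_right; lra.
- right; apply: inside_of_pierced_disjoint pBC pAC _ lt_BA.
  by move/meets_sym.
Qed.

Section Orientation.
Variables A B : frame.
Hypotheses (resAB : restricted_pair A B) (resBA : restricted_pair B A).

Lemma pierces_of_right_meet : meets (right_side A) (on_frame B) -> pierces A B.
Proof.
case: resAB resBA => cA lA rA [cB _ _] /rA [[[x1 y1] [[/= ? ?] [/= ? ?]]]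
                                           [[x2 y2] [[/= ? ?] [/= ? ?]]]].
have := fx_lt A; have := fy_lt A; have := fx_lt B; have := fy_lt B => ? ? ? ?.
have ? : x1 <> fx1 B.
  by move=> ?; apply: (cB (x1, y1)); [split; simpl; tauto | apply: on_frame_right; lra].
have ? : x1 <> fx2 B.
  by move=> ?; apply: (cB (x1, y1)); [split; simpl; tauto | apply: on_frame_right; lra].
have ? : y1 <> fy2 A.
  by move=> ?; apply: (cA (x1, y1)); [split; simpl; tauto | apply: on_frame_top; lra].
have ? : y2 <> fy1 A.
  by move=> ?; apply: (cA (x2, y2)); [split; simpl; tauto | apply: on_frame_bottom; lra].
have ? : fx1 A < fx1 B.
  apply: Rnot_le_lt => ?; apply: lA; exists (fx1 A, fy2 B).
  by split; [split; simpl; lra | apply: on_frame_top; lra].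
by split; lra.
Qed.

End Orientation.

(* Condition (2) excludes the left sides and condition (1) forbids two horizontal
   sides to cross, so the common point lies on a right side. *)
Lemma pierces_of_meet A B : restricted_pair A B -> restricted_pair B A ->
  meets (on_frame A) (on_frame B) -> pierces A B \/ pierces B A.
Proof.
move=> resAB resBA [[x y] [hA hB]].
case: (resAB) (resBA) => cA lA _ [cB lB _].
move: (hA) (hB) => [[[? ?] [? ?]] sA] [[[? ?] [? ?]] sB]; simpl in *.
have := fx_lt A; have := fy_lt A; have := fx_lt B; have := fy_lt B => ? ? ? ?.
case: sA => [? | [? | yA]].
- by exfalso; apply: lA; exists (x, y); split=> //; split; simpl; lra.
- by left; apply: pierces_of_right_meet => //; exists (x, y); split=> //; split; simpl; lra.
case: sB => [? | [? | yB]].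
- by exfalso; apply: lB; exists (x, y); split=> //; split; simpl; lra.
- by right; apply: pierces_of_right_meet => //; exists (x, y); split=> //; split; simpl; lra.
exfalso; case: (Rle_lt_dec (fx1 A) (fx1 B)) => ?.
- apply: (cB (fx1 B, y)); first by split; [left | case: yB; auto].
  by split; [split; simpl; lra | right; right].
- apply: (cA (fx1 A, y)); first by split; [left | case: yA; auto].
  by split; [split; simpl; lra | right; right].
Qed.

Section FrameGraph.
Variables (V : finType) (e : rel V) (F : V -> frame).
Hypotheses (sym_e : symmetric e) (irr_e : irreflexive e).
Hypothesis F_rep :
  forall u v, u <> v -> (e u v <-> meets (on_frame (F u)) (on_frame (F v))).
Hypothesis F_res : forall u v, u <> v -> restricted_pair (F u) (F v).
Hypotheses (htf : triangle_free e) (nofsc : no_full_star_cutset e).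

Lemma edge_pierces u v : e u v -> pierces (F u) (F v) \/ pierces (F v) (F u).
Proof.
move=> e_uv; have /eqP uv := edge_neq irr_e e_uv.
apply: pierces_of_meet; [exact: F_res | exact: F_res (not_eq_sym uv) | exact/F_rep].
Qed.

Lemma pierces_edge u v : pierces (F u) (F v) -> e u v.
Proof.
move=> p_uv; have uv : u <> v by move=> u_v; move: p_uv; rewrite u_v => -[/Rlt_irrefl].
by apply/(F_rep uv); apply: pierces_meet.
Qed.

Lemma nonedge_disjoint u v : u <> v -> ~~ e u v ->
  ~ meets (on_frame (F u)) (on_frame (F v)).
Proof. by move=> uv /negP not_uv /(F_rep uv). Qed.

Lemma inside_neq u v : inside (F u) (F v) -> u <> v.
Proof. by move=> in_uv u_v; move: in_uv; rewrite u_v => -[/Rlt_irrefl]. Qed.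

Lemma inside_nonedge u v : inside (F u) (F v) -> ~~ e v u.
Proof.
move=> in_uv; apply/negP => /(F_rep (not_eq_sym (inside_neq in_uv))) /meets_sym.
exact: inside_not_meet.
Qed.

(* Walking through the connected graph [G - N[v]], a frame meeting a frame inside
   [F v] but not [F v] itself stays inside [F v]. *)
Lemma inside_of_nonneighbour v w u : inside (F w) (F v) -> u <> v -> ~~ e v u ->
  inside (F u) (F v).
Proof.
move=> in_wv uv not_vu.
have w_out : w \notin closed_nbhd e v.
  rewrite mem_closed_nbhd negb_or inside_nonedge // andbT.
  by apply/eqP; apply: inside_neq in_wv.
have u_out : u \notin closed_nbhd e v.
  by rewrite mem_closed_nbhd negb_or not_vu andbT; apply/eqP.
apply: (connect_invariant (Q := fun a => inside (F a) (F v))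
          (connect_outside_nbhd nofsc w_out u_out) in_wv).
move=> a b in_av /and3P [_]; rewrite in_setC mem_closed_nbhd negb_or.
move=> /andP [/eqP bv not_vb] e_ab.
have /eqP ab := edge_neq irr_e e_ab.
have [p [pa pb]] := (F_rep ab).1 e_ab.
have [px py] := inside_interior in_av pa.
exact: inside_of_disjoint (nonedge_disjoint (not_eq_sym bv) not_vb) pb px py.
Qed.

Lemma nested_piercers a b c : a <> b -> pierces (F a) (F c) -> pierces (F b) (F c) ->
  inside (F a) (F b) \/ inside (F b) (F a).
Proof.
move=> ab p_ac p_bc; apply: (nested_of_pierced_disjoint p_ac p_bc).
apply: nonedge_disjoint ab _; apply/negP => e_ab.
by apply: (no_triangle htf e_ab (pierces_edge p_bc)); rewrite sym_e; apply: pierces_edge.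
Qed.

Definition unique_piercer_off (h : V) : Prop :=
  forall a b c, a <> h -> b <> h -> c <> h ->
    pierces (F a) (F c) -> pierces (F b) (F c) -> a = b.

Section LeftmostHost.
Variables h w : V.
Hypothesis in_wh : inside (F w) (F h).
Hypothesis h_leftmost : forall z w', inside (F w') (F z) -> fx1 (F h) <= fx1 (F z).

(* Comparing [b] with [h], then [c] with [h], yields
   [fx2 (F h) < fx2 (F b) < fx2 (F c) < fx2 (F h)]. *)
Lemma leftmost_host_no_piercing_host a b c : a <> h -> b <> h -> c <> h ->
  inside (F a) (F b) -> pierces (F b) (F c) -> False.
Proof.
move=> ah bh ch in_ab p_bc; have le_hb := h_leftmost in_ab.
have e_hb : e h b.
  apply/negPn/negP => not_hb; have not_bh : ~~ e b h by rewrite sym_e.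
  have [lt_hb _ _ _] := inside_of_nonneighbour in_wh bh not_hb.
  have [lt_bh _ _ _] := inside_of_nonneighbour in_ab (not_eq_sym bh) not_bh.
  lra.
case: (edge_pierces e_hb) => [p_hb | [lt_bh _ _ _ _]]; last lra.
have not_hc : ~~ e h c.
  by apply/negP => e_hc; apply: (no_triangle htf e_hb (pierces_edge p_bc)); rewrite sym_e.
have [_ lt_ch _ _] := inside_of_nonneighbour in_wh ch not_hc.
by case: p_hb p_bc => _ _ ? _ _ [_ _ ? _ _]; lra.
Qed.

Lemma unique_piercer_off_leftmost_host : unique_piercer_off h.
Proof.
move=> a b c ah bh ch p_ac p_bc; apply: NNPP => ab.
case: (nested_piercers ab p_ac p_bc) => [in_ab | in_ba].
  exact: leftmost_host_no_piercing_host ah bh ch in_ab p_bc.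
exact: leftmost_host_no_piercing_host bh ah ch in_ba p_ac.
Qed.

End LeftmostHost.

Lemma exists_unique_piercer_off (v0 : V) : exists h, unique_piercer_off h.
Proof.
case: (classic (exists z w, inside (F w) (F z))) => [nesting | no_nesting]; last first.
  exists v0 => a b c _ _ _ p_ac p_bc; apply: NNPP => ab.
  case: (nested_piercers ab p_ac p_bc) => in_ab;
    by apply: no_nesting; do 2 eexists; exact: in_ab.
have [|h [_ [w in_wh] h_min]] := exists_argmin (fun z => fx1 (F z))
  (P := fun z => exists w, inside (F w) (F z)) (s := enum V).
  by case: nesting => z [w in_wz]; exists z; [rewrite mem_enum | exists w].
exists h; apply: unique_piercer_off_leftmost_host in_wh _ => z w' in_w'z.
exact: h_min (mem_enum _ z) (ex_intro _ w' in_w'z).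
Qed.

(* In a cycle, the frame whose right side is rightmost is pierced by both of its
   neighbours on the cycle. *)
Lemma acyclic_off_unique_piercer h : unique_piercer_off h -> acyclic_on e (~: [set h]).
Proof.
move=> uniq_h [// | c0 s] s_h s_uniq s_size; apply/negP => s_cycle.
have s_neq x : x \in c0 :: s -> x <> h.
  by move=> xs x_h; move/allP: s_h => /(_ x xs); rewrite x_h !inE eqxx.
have [c [cs _ c_max]] := exists_argmin (fun v => - fx2 (F v)) (P := fun _ => True)
  (ex_intro2 _ _ c0 (mem_head c0 s) I).
have [a [b [a_s b_s ab e_ca e_bc]]] := cycle_neighbours s_uniq s_size s_cycle cs.
have p_ac : pierces (F a) (F c).
  by case: (edge_pierces e_ca) => [[_ _ ? _ _] | //]; have := c_max a a_s I; lra.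
have p_bc : pierces (F b) (F c).
  by case: (edge_pierces e_bc) => [// | [_ _ ? _ _]]; have := c_max b b_s I; lra.
by move/eqP: ab; apply; apply: uniq_h (s_neq _ a_s) (s_neq _ b_s) (s_neq _ cs) p_ac p_bc.
Qed.

End FrameGraph.

Local Close Scope R_scope.

Theorem lemma3p12 (V : finType) (e : rel V) :
  simple_graph e ->
  connected_graph e ->
  triangle_free e ->
  no_full_star_cutset e ->
  restricted_frame_graph e ->
  is_path_graph e \/ is_chandelier e.
Proof.
move=> [sym_e irr_e] hconn htf nofsc [F [F_rep [F_corner [F_left [F_right _]]]]].
have F_res u v : u <> v -> restricted_pair (F u) (F v).
  by move=> uv; split; [exact: F_corner | exact: F_left | exact: F_right].
have [v0 _ | V0] := pickP (@predT V); last first.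
  by left; apply: (path_graph_of_seq (s := [::])) => // a; have := V0 a.
case: (classic (exists l, forall a b, e l a -> e l b -> a = b)) => [[l l_deg] | no_leaf].
  by left; apply: path_graph_of_leaf l_deg.
right; have [h uniq_h] := exists_unique_piercer_off sym_e irr_e F_rep F_res htf nofsc v0.
apply: (chandelier_of_acyclic_minus (h := h)) => //; last first.
  exact: acyclic_off_unique_piercer uniq_h.
move=> v; apply: NNPP => no_two; apply: no_leaf; exists v => a b e_va e_vb.
by apply: NNPP => ab; apply: no_two; exists a, b; split=> //; apply/eqP.
Qed.
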